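(* For $n\ge2$, the subgroup $\langle\rho_1,\dots,\rho_{n-1}\rangle$ of $TVB_n$ is isomorphic to $S_n$ (via $\rho_i\mapsto(i,i+1)$), and $TVB_n$ is the internal semidirect product $TVB_n=TVP_n\rtimes\langle\rho_1,\dots,\rho_{n-1}\rangle$, where the action on $TVP_n$ by conjugation is given by permutation of indices: for $a\in\langle\rho_1,\dots,\rho_{n-1}\rangle$ with image $\bar a\in S_n$, $a^{-1}\lambda_{ij}a=\lambda_{(i)\bar a,(j)\bar a}$ and $a^{-1}\gamma_i a=\gamma_{(i)\bar a}$.
   Context: For $n\ge 2$, the twisted virtual braid group $TVB_n$ is the group with generators $\sigma_1,\dots,\sigma_{n-1}$, $\rho_1,\dots,\rho_{n-1}$, $\gamma_1,\dots,\gamma_n$ and defining relations: $\sigma_i\sigma_{i+1}\sigma_i=\sigma_{i+1}\sigma_i\sigma_{i+1}$ ($1\le i\le n-2$); $\sigma_i\sigma_j=\sigma_j\sigma_i$ ($|i-j|\ge 2$); $\rho_i^2=1$; $\rho_i\rho_j=\rho_j\rho_i$ ($|i-j|\ge2$); $\rho_i\rho_{i+1}\rho_i=\rho_{i+1}\rho_i\rho_{i+1}$ ($1\le i\le n-2$); $\sigma_i\rho_j=\rho_j\sigma_i$ ($|i-j|\ge 2$); $\rho_i\rho_{i+1}\sigma_i=\sigma_{i+1}\rho_i\rho_{i+1}$ ($1\le i\le n-2$); $\gamma_i^2=1$ and $\gamma_i\gamma_j=\gamma_j\gamma_i$ (all $i,j$); $\gamma_j\rho_i=\rho_i\gamma_j$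 and $\gamma_j\sigma_i=\sigma_i\gamma_j$ for $j\notin\{i,i+1\}$; $\rho_i\gamma_i=\gamma_{i+1}\rho_i$ ($1\le i\le n-1$); $\rho_i\sigma_i\rho_i=\gamma_{i+1}\gamma_i\sigma_i\gamma_i\gamma_{i+1}$ ($1\le i\le n-1$). $\varphi_P:TVB_n\to S_n$ is the homomorphism with $\sigma_i\mapsto(i,i+1)$, $\rho_i\mapsto(i,i+1)$, $\gamma_j\mapsto e$, and $TVP_n=\ker\varphi_P$. In $TVB_n$ define $\lambda_{i,i+1}=\rho_i\sigma_i^{-1}$, $\lambda_{i+1,i}=\rho_i\lambda_{i,i+1}\rho_i$ ($1\le i\le n-1$), and for $1\le i<j-1\le n-1$: $\lambda_{ij}=\rho_{j-1}\cdots\rho_{i+1}\lambda_{i,i+1}\rho_{i+1}\cdots\rho_{j-1}$, $\lambda_{ji}=\rho_{j-1}\cdots\rho_{i+1}\lambda_{i+1,i}\rho_{i+1}\cdots\rho_{j-1}$. Permutations act on the right, $(k)\bar a$ being the image of $k$. *)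

(* The twisted virtual braid group TVB_n is encoded by its
   presentation: words over the generators and their inverses, modulo the
   congruence generated by free cancellation and the defining relations. *)
From mathcomp Require Import all_boot all_fingroup.
Set Implicit Arguments. Unset Strict Implicit. Unset Printing Implicit Defensive.

(* Generators, with 1-based indices as in the paper:
   Sg i = sigma_i, Rh i = rho_i, Ga j = gamma_j. *)
Inductive gen : Type := Sg of nat | Rh of nat | Ga of nat.

(* a letter is a generator together with an "inverse" flag (true = inverse) *)
Definition letter := (gen * bool)%type.
Definition word := seq letter.

Definition sg (i : nat) : word := [:: (Sg i, false)].
Definition rh (i : nat) : word := [:: (Rh i, false)].
Definition ga (j : nat) : word := [:: (Ga j, false)].

Definition winv (w : word) : word := rev (map (fun l => (l.1, ~~ l.2)) w).

Definition far (i j : nat) : bool := (i.+1 < j) || (j.+1 < i).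

Inductive tvb_rel (n : nat) : word -> word -> Prop :=
| R_s_braid i : 1 <= i <= n - 2 ->
    tvb_rel n (sg i ++ sg i.+1 ++ sg i) (sg i.+1 ++ sg i ++ sg i.+1)
| R_s_comm i j : 1 <= i <= n - 1 -> 1 <= j <= n - 1 -> far i j ->
    tvb_rel n (sg i ++ sg j) (sg j ++ sg i)
| R_r_sq i : 1 <= i <= n - 1 -> tvb_rel n (rh i ++ rh i) [::]
| R_r_comm i j : 1 <= i <= n - 1 -> 1 <= j <= n - 1 -> far i j ->
    tvb_rel n (rh i ++ rh j) (rh j ++ rh i)
| R_r_braid i : 1 <= i <= n - 2 ->
    tvb_rel n (rh i ++ rh i.+1 ++ rh i) (rh i.+1 ++ rh i ++ rh i.+1)
| R_sr_comm i j : 1 <= i <= n - 1 -> 1 <= j <= n - 1 -> far i j ->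
    tvb_rel n (sg i ++ rh j) (rh j ++ sg i)
| R_mixed i : 1 <= i <= n - 2 ->
    tvb_rel n (rh i ++ rh i.+1 ++ sg i) (sg i.+1 ++ rh i ++ rh i.+1)
| R_g_sq i : 1 <= i <= n -> tvb_rel n (ga i ++ ga i) [::]
| R_g_comm i j : 1 <= i <= n -> 1 <= j <= n ->
    tvb_rel n (ga i ++ ga j) (ga j ++ ga i)
| R_gr_comm i j : 1 <= i <= n - 1 -> 1 <= j <= n -> j != i -> j != i.+1 ->
    tvb_rel n (ga j ++ rh i) (rh i ++ ga j)
| R_gs_comm i j : 1 <= i <= n - 1 -> 1 <= j <= n -> j != i -> j != i.+1 ->
    tvb_rel n (ga j ++ sg i) (sg i ++ ga j)
| R_rg i : 1 <= i <= n - 1 -> tvb_rel n (rh i ++ ga i) (ga i.+1 ++ rh i)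
| R_rsr i : 1 <= i <= n - 1 ->
    tvb_rel n (rh i ++ sg i ++ rh i) (ga i.+1 ++ ga i ++ sg i ++ ga i ++ ga i.+1).

Inductive tvb_eq (n : nat) : word -> word -> Prop :=
| te_refl w : tvb_eq n w w
| te_sym w1 w2 : tvb_eq n w1 w2 -> tvb_eq n w2 w1
| te_trans w1 w2 w3 : tvb_eq n w1 w2 -> tvb_eq n w2 w3 -> tvb_eq n w1 w3
| te_rel u v a b : tvb_rel n a b -> tvb_eq n (u ++ a ++ v) (u ++ b ++ v)
| te_cancel u v x b : tvb_eq n (u ++ [:: (x, b); (x, ~~ b)] ++ v) (u ++ v).

Definition valid_letter (n : nat) (l : letter) : bool :=
  match l.1 with
  | Sg i | Rh i => (1 <= i <= n - 1)
  | Ga j => (1 <= j <= n)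
  end.
Definition wf (n : nat) (w : word) : bool := all (valid_letter n) w.

Definition is_rho (n : nat) (l : letter) : bool :=
  if l.1 is Rh i then (1 <= i <= n - 1) else false.
Definition rho_word (n : nat) (w : word) : bool := all (is_rho n) w.

(* the transposition (i, i+1) of {1..n}, encoded on 'I_n via k |-> k-1 *)
Definition tr (n i : nat) : 'S_n :=
  match (insub i.-1 : option 'I_n), (insub i : option 'I_n) with
  | Some a, Some b => tperm a b
  | _, _ => 1%g
  end.

(* phi_P on letters and words; mathcomp's permutation product (s * t) x = t (s x)
   is the composition for right actions, as in the paper *)
Definition letter_perm (n : nat) (l : letter) : 'S_n :=
  let t := match l.1 with Sg i | Rh i => tr n i | Ga _ => 1%g end in
  if l.2 then t^-1%g else t.
Definition phiP (n : nat) (w : word) : 'S_n :=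
  foldr (fun l acc => (letter_perm n l * acc)%g) 1%g w.

Definition actn (n : nat) (s : 'S_n) (k : nat) : nat :=
  if (insub k.-1 : option 'I_n) is Some o then (nat_of_ord (s o)).+1 else k.

(* rho_a rho_{a+1} ... rho_b, and rho_b ... rho_a (empty if b < a) *)
Definition rho_up (a b : nat) : word := flatten [seq rh k | k <- iota a (b.+1 - a)].
Definition rho_down (a b : nat) : word := rev (rho_up a b).

Definition lam (i j : nat) : word :=
  if i < j then
    rho_down i.+1 j.-1 ++ (rh i ++ winv (sg i)) ++ rho_up i.+1 j.-1
  else
    rho_down j.+1 i.-1 ++ (rh j ++ (rh j ++ winv (sg j)) ++ rh j) ++ rho_up j.+1 i.-1.

(* phi_P is well defined since every defining relation holds in S_n.  The rho's
   satisfy the Coxeter relations of S_n, and these alone bring every rho-word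
   to a normal form (a product of descending runs) that is determined by its
   permutation; hence <rho> is isomorphic to S_n, and the splitting
   w = (w a^-1) a with phi_P a = phi_P w gives TVB_n = TVP_n <rho>.
   For the action it suffices to conjugate by one rho_k.  Each lambda_{ij} is
   a frame rho_{t-1} ... rho_{c+1} X rho_{c+1} ... rho_{t-1} around the core
   X = lambda_{c,c+1} or lambda_{c+1,c}, where {c, t} = {i, j} and c < t.
   When k is not c-1 or c, rho_k only moves the frame, by commutation and
   braid relations; the two remaining cases reduce to the single identity
   rho_k lambda_{k+1,k+2} rho_k = rho_{k+1} lambda_{k,k+1} rho_{k+1}, a form
   of the mixed relation. *)
From mathcomp Require Import all_boot all_fingroup.
From mathcomp Require Import zify.
From Stdlib Require Import Setoid Morphisms.

Unset Printing Implicit Defensive.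

Notation R k := (Rh k, false).
Notation S k := (Sg k, false).
Notation Si k := (Sg k, true).

Lemma tvb_eq_ctx n a b : tvb_eq n a b ->
  forall u v, tvb_eq n (u ++ a ++ v) (u ++ b ++ v).
Proof.
elim=> {a b}.
- by move=> w u v; exact: te_refl.
- by move=> w1 w2 _ IH u v; exact: te_sym.
- by move=> w1 w2 w3 _ IH1 _ IH2 u v; exact: te_trans (IH1 u v) (IH2 u v).
- move=> u' v' a b H u v.
  by have := te_rel (u ++ u') (v' ++ v) H; rewrite !catA -!(catA _ _ v) !catA.
- move=> u' v' x b u v.
  by have := te_cancel n (u ++ u') (v' ++ v) x b; rewrite !catA -!(catA _ _ v) !catA.
Qed.

#[export] Hint Resolve te_refl : core.

#[export] Instance tvb_eq_Equivalence n : Equivalence (tvb_eq n).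
Proof. by split; [exact: te_refl | exact: te_sym | exact: te_trans]. Qed.

#[export] Instance cat_tvb_eq_Proper n :
  Proper (tvb_eq n ==> tvb_eq n ==> tvb_eq n) (@cat letter).
Proof.
move=> a b Hab c d Hcd; transitivity (b ++ c).
  exact: (tvb_eq_ctx _ _ _ Hab [::] c).
by have := tvb_eq_ctx _ _ _ Hcd b [::]; rewrite !cats0.
Qed.

#[export] Instance cons_tvb_eq_Proper n :
  Proper (eq ==> tvb_eq n ==> tvb_eq n) (@cons letter).
Proof.
by move=> x _ <- a b Hab; exact: (cat_tvb_eq_Proper n _ _ (te_refl n [:: x]) _ _ Hab).
Qed.

Lemma tvb_rel_eq n a b w : tvb_rel n a b -> tvb_eq n (a ++ w) (b ++ w).
Proof. by move=> H; exact: (te_rel [::] w H). Qed.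

Lemma tvb_cancel n x b w : tvb_eq n ((x, b) :: (x, ~~ b) :: w) w.
Proof. exact: (te_cancel n [::] w x b). Qed.

Lemma winv_cons (l : letter) w : winv (l :: w) = winv w ++ [:: (l.1, ~~ l.2)].
Proof. by rewrite /winv /= rev_cons cats1. Qed.

Lemma winv_cat_cancel n w : tvb_eq n (winv w ++ w) [::].
Proof.
elim: w => [|[x b] w IH] //=.
by rewrite winv_cons -catA /= -{2}(negbK b) tvb_cancel.
Qed.

Section RhoRelations.
Variable n : nat.

Lemma rho_sq k w : 1 <= k <= n - 1 -> tvb_eq n (R k :: R k :: w) w.
Proof. by move=> hk; exact: (tvb_rel_eq _ _ _ w (R_r_sq hk)). Qed.

Lemma rhoV k b w : 1 <= k <= n - 1 -> tvb_eq n ((Rh k, b) :: w) (R k :: w).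
Proof.
case: b => // hk; transitivity ((Rh k, true) :: R k :: R k :: w).
  by rewrite rho_sq.
exact: (tvb_cancel n (Rh k) true).
Qed.

Lemma rho_comm i j w : 1 <= i <= n - 1 -> 1 <= j <= n - 1 -> far i j ->
  tvb_eq n (R i :: R j :: w) (R j :: R i :: w).
Proof. by move=> hi hj f; exact: (tvb_rel_eq _ _ _ w (R_r_comm hi hj f)). Qed.

Lemma rho_braid i w : 1 <= i <= n - 2 ->
  tvb_eq n (R i :: R i.+1 :: R i :: w) (R i.+1 :: R i :: R i.+1 :: w).
Proof. by move=> hi; exact: (tvb_rel_eq _ _ _ w (R_r_braid hi)). Qed.

Lemma sigmaV_rho_comm i j w : 1 <= i <= n - 1 -> 1 <= j <= n - 1 -> far i j ->
  tvb_eq n (Si i :: R j :: w) (R j :: Si i :: w).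
Proof.
move=> hi hj f.
transitivity (Si i :: R j :: S i :: Si i :: w); first by rewrite tvb_cancel.
have /= <- := tvb_rel_eq _ _ _ (Si i :: w) (R_sr_comm hi hj f).
exact: (tvb_cancel n (Sg i) true).
Qed.

Lemma mixedV h w : 1 <= h <= n - 2 ->
  tvb_eq n (Si h.+1 :: R h :: R h.+1 :: w) (R h :: R h.+1 :: Si h :: w).
Proof.
move=> hh.
transitivity (Si h.+1 :: R h :: R h.+1 :: S h :: Si h :: w).
  by rewrite tvb_cancel.
have /= -> := tvb_rel_eq _ _ _ (Si h :: w) (R_mixed hh).
exact: (tvb_cancel n (Sg h.+1) true).
Qed.

End RhoRelations.

Ltac case_ifs := repeat match goal with |- context [if ?c then _ else _] =>
  lazymatch c with context [if _ then _ else _] => fail | _ =>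
  let E := fresh "E" in
  destruct c eqn:E; [move/eqP: E => E | move/negbT/eqP: E => E] end end.

Definition adj_swap (k x : nat) : nat :=
  if x == k then k.+1 else if x == k.+1 then k else x.

Section Transpositions.
Variable n : nat.

Lemma tr_val i (hi : 1 <= i < n) (x : 'I_n) :
  val (tr n i x) = if val x == i.-1 then i else if val x == i then i.-1 else val x.
Proof.
rewrite /tr; case: insubP => [a _ ea|]; last by rewrite /=; lia.
case: insubP => [b _ eb|]; last by rewrite /=; lia.
case: tpermP => [->|->|xa xb]; first by rewrite ea eb eqxx.
  by rewrite ea eb ifN ?eqxx //; lia.
have /negbTE-> : val x != i.-1 by rewrite -ea val_eqE; apply/eqP.
by have /negbTE-> : val x != i by rewrite -eb val_eqE; apply/eqP.
Qed.

Lemma tr_comm i j : 1 <= i < n -> 1 <= j < n -> far i j ->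
  (tr n i * tr n j = tr n j * tr n i)%g.
Proof.
rewrite /far => hi hj f; apply/permP => x; apply: val_inj; rewrite !permM.
by do 3?rewrite ?(tr_val _ hi) ?(tr_val _ hj); case_ifs; lia.
Qed.

Lemma tr_braid i : 1 <= i -> i.+1 < n ->
  (tr n i * tr n i.+1 * tr n i = tr n i.+1 * tr n i * tr n i.+1)%g.
Proof.
move=> i1 i2; have hi : 1 <= i < n by lia.
have hj : 1 <= i.+1 < n by lia.
apply/permP => x; apply: val_inj; rewrite !permM.
by do 4?rewrite ?(tr_val _ hi) ?(tr_val _ hj); case_ifs; lia.
Qed.

Lemma tr_sq i : (tr n i * tr n i = 1)%g.
Proof.
by rewrite /tr; case: (insub i.-1 : option 'I_n) => [a|];
  case: (insub i : option 'I_n) => [b|]; rewrite ?tperm2 ?mulg1.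
Qed.

Lemma trV i : ((tr n i)^-1 = tr n i)%g.
Proof.
by rewrite /tr; case: (insub i.-1 : option 'I_n) => [a|];
  case: (insub i : option 'I_n) => [b|]; rewrite ?tpermV ?invg1.
Qed.

Lemma tr_tperm (x y : 'I_n) : y = x.+1 :> nat -> tr n y = tperm x y.
Proof. by move=> e; rewrite /tr {1}e /= !valK. Qed.

Lemma letter_perm_rho k b : letter_perm n (Rh k, b) = tr n k.
Proof. by rewrite /letter_perm; case: b; rewrite ?trV. Qed.

Lemma letter_perm_flip (l : letter) :
  letter_perm n (l.1, ~~ l.2) = ((letter_perm n l)^-1)%g.
Proof. by rewrite /letter_perm /=; case: l.2; rewrite ?invgK. Qed.

Lemma phiP_cat a b : phiP n (a ++ b) = (phiP n a * phiP n b)%g.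
Proof. by elim: a => [|l a IH] /=; rewrite ?mul1g // IH mulgA. Qed.

Lemma phiP_winv w : phiP n (winv w) = ((phiP n w)^-1)%g.
Proof.
elim: w => [|l w IH]; first by rewrite /= invg1.
by rewrite winv_cons phiP_cat IH /= letter_perm_flip mulg1 invMg.
Qed.

Lemma phiP_rel a b : tvb_rel n a b -> phiP n a = phiP n b.
Proof.
case=> {a b} [i h|i j hi hj f|i h|i j hi hj f|i h|i j hi hj f|i h|i h|i j hi hj|
    i j hi hj ??|i j hi hj ??|i h|i h];
  rewrite /= /letter_perm /= ?mulg1 ?mul1g ?mulgA ?tr_sq ?mul1g //;
  by [apply: tr_braid; lia | apply: tr_comm => //; lia].
Qed.

Lemma phiP_eq a b : tvb_eq n a b -> phiP n a = phiP n b.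
Proof.
elim=> {a b} // [w1 w2 w3 _ -> _ -> //|u v a b /phiP_rel e|u v x b].
  by rewrite !phiP_cat e.
by rewrite !phiP_cat /= (letter_perm_flip (x, b)) mulg1 mulgV mul1g.
Qed.

Lemma actnE (s : 'S_n) x : 1 <= x <= n ->
  exists o : 'I_n, val o = x.-1 /\ actn s x = (val (s o)).+1.
Proof. by move=> hx; rewrite /actn; case: insubP => [o _ eo|]; [exists o | rewrite /=; lia]. Qed.

Lemma actnM (s t : 'S_n) x : 1 <= x <= n -> actn (s * t)%g x = actn t (actn s x).
Proof.
move=> hx; have [o [eo ->]] := actnE (s * t)%g _ hx; have [o' [eo' ->]] := actnE s _ hx.
have -> : o' = o by apply: val_inj; rewrite eo eo'.
have hy : 1 <= (val (s o)).+1 <= n by have : val (s o) < n := ltn_ord (s o); lia.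
have [o2 [eo2 ->]] := actnE t _ hy.
have -> : o2 = s o by apply: val_inj; rewrite eo2.
by rewrite permM.
Qed.

Lemma actn1 x : 1 <= x <= n -> actn (1%g : 'S_n) x = x.
Proof. by move=> hx; have [o [eo ->]] := actnE 1%g _ hx; rewrite perm1 eo; lia. Qed.

Lemma actn_tr k x : 1 <= k < n -> 1 <= x <= n -> actn (tr n k) x = adj_swap k x.
Proof.
move=> hk hx; have [o [eo ->]] := actnE (tr n k) _ hx.
by rewrite (tr_val _ hk) eo /adj_swap; case_ifs; lia.
Qed.

End Transpositions.

Fixpoint rho_asc (a m : nat) : word :=
  if m is m'.+1 then R a :: rho_asc a.+1 m' else [::].
Fixpoint rho_desc (a m : nat) : word :=
  if m is m'.+1 then R (a + m') :: rho_desc a m' else [::].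

Lemma rho_asc_rcons a m : rho_asc a m.+1 = rho_asc a m ++ [:: R (a + m)].
Proof.
elim: m a => [|m IH] a; first by rewrite /= addn0.
by rewrite -[rho_asc a m.+2]/(R a :: rho_asc a.+1 m.+1) IH addSnnS.
Qed.

Lemma rho_desc_rcons a m : rho_desc a m.+1 = rho_desc a.+1 m ++ [:: R a].
Proof.
elim: m => [|m IH]; first by rewrite /= addn0.
by rewrite -[rho_desc a m.+2]/(R (a + m.+1) :: rho_desc a m.+1) IH /= addSnnS.
Qed.

Lemma rho_upE a b : rho_up a b = rho_asc a (b.+1 - a).
Proof. by rewrite /rho_up; move: (b.+1 - a) => m; elim: m a => [|m IH] a //=; rewrite IH. Qed.

Lemma rho_downE a b : rho_down a b = rho_desc a (b.+1 - a).
Proof.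
rewrite /rho_down rho_upE; move: (b.+1 - a) => m; elim: m a => [|m IH] a //.
by rewrite [rho_asc a _]/= rev_cons IH -cats1 -rho_desc_rcons.
Qed.

Ltac far_lia := rewrite /far; lia.

Notation rho_commutes n k X := (forall w, tvb_eq n (R k :: X ++ w) (X ++ R k :: w)).

Section RhoRuns.
Variable n : nat.

Lemma rho_desc_comm k a m : 1 <= k <= n - 1 -> 1 <= a -> a + m <= n ->
  (k.+1 < a) || (a + m < k) -> rho_commutes n k (rho_desc a m).
Proof.
move=> hk ha; elim: m => [|m IH] ham f w //=.
rewrite (rho_comm _ k (a + m)); [|far_lia..].
by rewrite IH; [|far_lia..].
Qed.

Lemma rho_asc_comm k a m : 1 <= k <= n - 1 -> 1 <= a -> a + m <= n ->
  (k.+1 < a) || (a + m < k) -> rho_commutes n k (rho_asc a m).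
Proof.
move=> hk; elim: m a => [|m IH] a ha ham f w //=.
rewrite (rho_comm _ k a); [|far_lia..].
by rewrite IH; [|far_lia..].
Qed.

Lemma rho_desc_shift k a m w : 1 <= a <= k -> k.+2 <= a + m <= n ->
  tvb_eq n (R k :: rho_desc a m ++ w) (rho_desc a m ++ R k.+1 :: w).
Proof.
move=> hak; elim: m w => [|m IH] w hm; first lia.
case: (ltnP k.+2 (a + m.+1)) => h.
  rewrite /= (rho_comm _ k (a + m)); [|far_lia..].
  by rewrite IH; [|far_lia..].
case: m IH hm h => [|m] IH hm h; first lia.
have e : a + m = k by lia.
rewrite [rho_desc a _]/= [rho_desc a _]/= addnS e rho_braid; [|lia].
by rewrite (rho_desc_comm k.+1 a m); [|far_lia..].
Qed.

Lemma rho_asc_shift k a m w : 1 <= a <= k -> k.+2 <= a + m <= n ->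
  tvb_eq n (rho_asc a m ++ R k :: w) (R k.+1 :: rho_asc a m ++ w).
Proof.
elim: m a w => [|m IH] a w hak hm; first lia.
case: (ltnP a k) => h.
  rewrite /= IH; [|far_lia..].
  by rewrite (rho_comm _ a k.+1); [|far_lia..].
case: m IH hm => [|m] IH hm; first lia.
have e : a = k by lia.
subst a; rewrite /= -(rho_asc_comm k k.+2 m); [|far_lia..].
by rewrite rho_braid; [|lia].
Qed.

End RhoRuns.

(* Normal forms of words in rho_1, ..., rho_m: a normal form in rho_1, ...,
   rho_{m-1} followed by a descending run rho_m ... rho_j (empty if j = m + 1).
   The run sends m + 1 to j, so it can be read off the permutation. *)
Fixpoint rho_nf (m : nat) (w : word) : Prop :=
  if m is m'.+1 then
    exists u j, [/\ rho_nf m' u, 1 <= j <= m'.+2 & w = u ++ rho_desc j (m'.+2 - j)]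
  else w = [::].

Definition rho_le (m : nat) (l : letter) : bool :=
  if l is (Rh k, false) then 1 <= k <= m else false.

Lemma rho_nf_nil m : rho_nf m [::].
Proof. by elim: m => [|m IH] //=; exists [::], m.+2; rewrite subnn; split => //; lia. Qed.

Lemma all_rho_le_desc m a L : 1 <= a -> a + L <= m.+1 -> all (rho_le m) (rho_desc a L).
Proof. by move=> ha; elim: L => [|L IH] h //=; rewrite IH ?andbT; lia. Qed.

Lemma rho_nf_all m u : rho_nf m u -> all (rho_le m) u.
Proof.
elim: m u => [|m IH] u /=; first by move->.
case=> v [j [hv hj ->]]; rewrite all_cat.
apply/andP; split; last by apply: all_rho_le_desc; lia.
by apply: sub_all (IH v hv) => -[[k|k|k] [|]] //=; lia.
Qed.

Section RhoWords.
Variable n : nat.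

Lemma rho_nf_rcons m u k : m < n -> rho_nf m u -> 1 <= k <= m ->
  exists u', rho_nf m u' /\ tvb_eq n (u ++ [:: R k]) u'.
Proof.
elim: m u k => [|m IH] u k hm; first by move=> _; lia.
case=> v [j [hv hj ->]] hk.
case: (ltnP k.+1 j) => h1.
  have [v' [hv' e]] := IH v k ltac:(lia) hv ltac:(lia).
  exists (v' ++ rho_desc j (m.+2 - j)); split; first by exists v', j.
  rewrite -catA /= -(rho_desc_comm n k j (m.+2 - j)); [|far_lia..].
  by rewrite -e -catA cats0.
case: (ltnP j k) => h2; last first.
  have e : m.+2 - k = (m.+2 - k.+1).+1 by lia.
  case: (ltnP k j) => h3.
    have -> : j = k.+1 by lia.
    exists (v ++ rho_desc k (m.+2 - k)); split; first by exists v, k; split => //; lia.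
    by rewrite e rho_desc_rcons -catA.
  have -> : j = k by lia.
  exists (v ++ rho_desc k.+1 (m.+2 - k.+1)); split; first by exists v, k.+1; split => //; lia.
  by rewrite e rho_desc_rcons -!catA /= rho_sq ?cats0; last lia.
case: k hk h1 h2 => [|k] hk h1 h2; first lia.
have [v' [hv' e]] := IH v k ltac:(lia) hv ltac:(lia).
exists (v' ++ rho_desc j (m.+2 - j)); split; first by exists v', j.
rewrite -catA -(rho_desc_shift n k j (m.+2 - j)); [|lia..].
by rewrite -e -catA cats0.
Qed.

Lemma rho_nf_exists a : 1 <= n -> rho_word n a -> exists u, rho_nf (n - 1) u /\ tvb_eq n a u.
Proof.
move=> hn; elim/last_ind: a => [|a l IH]; first by exists [::]; split => //; exact: rho_nf_nil.
rewrite /rho_word all_rcons => /andP [hl /IH [u [hu e]]].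
case: l hl => [[k|k|k] b] //= hk.
have [u' [hu' e']] := rho_nf_rcons (n - 1) u k ltac:(lia) hu hk.
by exists u'; split => //; rewrite -cats1 e (rhoV n k b [::] hk).
Qed.

Lemma actn_rho_le_fix m u x : all (rho_le m) u -> m.+1 < x <= n -> actn (phiP n u) x = x.
Proof.
move=> + hx; elim: u => [|[[k|k|k] [|]] u IH] //=; first by rewrite actn1 //; lia.
case/andP=> hk /IH {}IH; rewrite actnM ?letter_perm_rho ?actn_tr; [|lia..].
by rewrite /adj_swap !ifN //; apply/eqP; lia.
Qed.

Lemma actn_rho_desc_top a L : 1 <= a -> a + L <= n -> actn (phiP n (rho_desc a L)) (a + L) = a.
Proof.
move=> ha; elim: L => [|L IH] h /=; first by rewrite addn0 actn1 //; lia.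
rewrite actnM ?letter_perm_rho ?actn_tr; [|lia..].
by rewrite /adj_swap ifN ?addnS ?eqxx ?IH //; [lia | apply/eqP; lia].
Qed.

Lemma rho_nf_inj m u u' : m < n -> rho_nf m u -> rho_nf m u' -> phiP n u = phiP n u' -> u = u'.
Proof.
elim: m u u' => [|m IH] u u' hm /=; first by move=> -> ->.
have top w i : rho_nf m w -> 1 <= i <= m.+2 ->
    actn (phiP n (w ++ rho_desc i (m.+2 - i))) m.+2 = i.
  move=> hw hi; rewrite phiP_cat actnM ?(actn_rho_le_fix m w m.+2) ?rho_nf_all //; try lia.
  have := actn_rho_desc_top i (m.+2 - i) ltac:(lia) ltac:(lia).
  by rewrite subnKC //; case/andP: hi.
case=> v [j [hv hj ->]] [v' [j' [hv' hj' ->]]] e.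
have ej : j = j' by rewrite -(top v j hv hj) -(top v' j' hv' hj') e.
subst j'; move: e; rewrite !phiP_cat => /mulIg e.
by rewrite (IH v v' ltac:(lia) hv hv' e).
Qed.

Lemma rho_word_inj a1 a2 : 1 <= n -> rho_word n a1 -> rho_word n a2 ->
  phiP n a1 = phiP n a2 -> tvb_eq n a1 a2.
Proof.
move=> hn /(rho_nf_exists _ hn) [u1 [hu1 e1]] /(rho_nf_exists _ hn) [u2 [hu2 e2]] e.
have eu : u1 = u2.
  by apply: (rho_nf_inj (n - 1)) => //; [lia | rewrite -(phiP_eq n _ _ e1) -(phiP_eq n _ _ e2)].
by rewrite e1 e2 eu.
Qed.

Lemma tperm_rho_word (x y : 'I_n) : exists a, rho_word n a /\ phiP n a = tperm x y.
Proof.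
wlog lt : x y / x < y.
  move=> W; case: (ltngtP x y) => h; first exact: W.
    by rewrite tpermC; exact: W.
  have -> : x = y by exact: val_inj.
  by exists [::]; rewrite tperm1.
have [d e] : exists d, nat_of_ord y = x + d.+1 by exists (y - x.+1); lia.
elim: d x y lt e => [|d IH] x y lt e; have hy : is_rho n (R y).
- by rewrite /is_rho /=; have := ltn_ord y; lia.
- exists [:: R y]; split; first by rewrite /rho_word /= hy.
  by rewrite /= /letter_perm /= mulg1; apply: tr_tperm; lia.
- by rewrite /is_rho /=; have := ltn_ord y; lia.
have hz : y.-1 < n by have := ltn_ord y; lia.
pose z := Ordinal hz.
have [a [ha pa]] := IH x z ltac:(rewrite /=; lia) ltac:(rewrite /=; lia).
exists ([:: R y] ++ a ++ [:: R y]); split.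
  by move: ha; rewrite /rho_word !all_cat /= hy => ->.
rewrite !phiP_cat pa /= /letter_perm /= mulg1.
have -> : tr n y = tperm z y by apply: tr_tperm => /=; lia.
have := tpermJ x z (tperm z y).
rewrite tpermL tpermD; first by move <-; rewrite conjgE tpermV mulgA.
all: by apply/eqP => /(congr1 val) /=; lia.
Qed.

Lemma rho_word_surj (s : 'S_n) : exists a, rho_word n a /\ phiP n a = s.
Proof.
have [ts -> _] := prod_tpermP s.
elim: ts => [|t ts [a [ha pa]]]; first by exists [::]; rewrite big_nil.
have [b [hb pb]] := tperm_rho_word t.1 t.2.
exists (b ++ a); split; first by rewrite /rho_word all_cat; apply/andP.
by rewrite phiP_cat pa pb big_cons.
Qed.

End RhoWords.

Definition frame (c m : nat) (X : word) : word := rho_desc c.+1 m ++ X ++ rho_asc c.+1 m.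

Lemma rho_commutes_conj n k X : 1 <= k <= n - 1 -> rho_commutes n k X ->
  tvb_eq n (R k :: X ++ [:: R k]) X.
Proof. by move=> hk hX; rewrite hX rho_sq ?cats0. Qed.

Lemma frame_grow c m X : frame c m.+1 X = R (c.+1 + m) :: frame c m X ++ [:: R (c.+1 + m)].
Proof. by rewrite /frame rho_asc_rcons -!catA. Qed.

Section FrameConj.
Variables (n c : nat) (X : word).
Hypothesis hc : 1 <= c.
Hypothesis X_comm : forall k, 1 <= k <= n - 1 -> far k c -> rho_commutes n k X.

Lemma frame_conj_outside k m : 1 <= k <= n - 1 -> c.+1 + m <= n ->
  (k.+1 < c) || (c.+1 + m < k) -> tvb_eq n (R k :: frame c m X ++ [:: R k]) (frame c m X).
Proof.
move=> hk hm f; apply: rho_commutes_conj => // w; rewrite /frame -!catA.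
rewrite rho_desc_comm; [|lia..]; rewrite X_comm; [|lia|far_lia].
by rewrite rho_asc_comm; [|lia..].
Qed.

Lemma frame_conj_inside k m : c < k -> k.+2 <= c.+1 + m <= n ->
  tvb_eq n (R k :: frame c m X ++ [:: R k]) (frame c m X).
Proof.
move=> ck hm; rewrite /frame -!catA rho_desc_shift; [|lia..].
rewrite X_comm; [|lia|far_lia].
rewrite rho_asc_shift; [|lia..].
by rewrite rho_sq ?cats0 //; lia.
Qed.

Lemma frame_conj_far k m m' : 1 <= k <= n - 1 -> c.+1 + m <= n -> k.+1 != c -> k != c ->
  c.+1 + m' = adj_swap k (c.+1 + m) ->
  tvb_eq n (R k :: frame c m X ++ [:: R k]) (frame c m' X).
Proof.
rewrite /adj_swap => hk hm k1c kc; case_ifs => em.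
- have -> : m' = m.+1 by lia.
  by rewrite frame_grow E.
- have [m'' em''] : exists m'', m = m''.+1 by exists m.-1; lia.
  have -> : m' = m'' by lia.
  have <- : c.+1 + m'' = k by lia.
  rewrite em'' frame_grow /= rho_sq; [|lia].
  by rewrite -catA cat1s (rho_sq n _ [::]) ?cats0 //; lia.
- have -> : m' = m by lia.
  case: (ltnP c k) => ck; last by apply: frame_conj_outside; lia.
  case: (ltnP (c.+1 + m) k) => tk; first by apply: frame_conj_outside; lia.
  by apply: frame_conj_inside; lia.
Qed.

End FrameConj.

Lemma frame_peel n k m X Y : 1 <= k -> k.+2 + m <= n ->
  tvb_eq n (R k :: Y ++ [:: R k]) (R k.+1 :: X ++ [:: R k.+1]) ->
  tvb_eq n (R k :: frame k.+1 m Y ++ [:: R k]) (frame k m.+1 X).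
Proof.
move=> hk hm H; rewrite /frame rho_desc_rcons [rho_asc k.+1 m.+1]/= -!catA.
rewrite rho_desc_comm; [|lia..].
rewrite -(rho_asc_comm n k k.+2 m _ _ _ _ [::]); [|lia..].
have -> : R k :: Y ++ R k :: rho_asc k.+2 m ++ [::] = (R k :: Y ++ [:: R k]) ++ rho_asc k.+2 m.
  by rewrite cats0 /= -catA.
by rewrite H /= -catA.
Qed.

Definition lam_core (b : bool) (c : nat) : word :=
  if b then [:: R c; R c; Si c; R c] else [:: R c; Si c].

Definition lam_dir (b : bool) (c t : nat) : word := if b then lam t c else lam c t.

Lemma lam_dirE b c m : lam_dir b c (c.+1 + m) = frame c m (lam_core b c).
Proof.
rewrite /lam_dir /lam /frame; case: b; [rewrite ifF | rewrite ifT]; try lia;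
  by rewrite rho_downE rho_upE (_ : (c.+1 + m).-1.+1 - c.+1 = m) //; lia.
Qed.

Section LamCore.
Variable n : nat.

Lemma lam_core_comm k b c : 1 <= k <= n - 1 -> 1 <= c <= n - 1 -> far k c ->
  rho_commutes n k (lam_core b c).
Proof.
move=> hk hc f w; have f' : far c k by move: f; rewrite /far; lia.
by case: b => /=; do ![rewrite (rho_comm n k c) // | rewrite -(sigmaV_rho_comm n c k) //].
Qed.

Lemma sigmaV_rho_conj h w : 1 <= h -> h.+1 <= n - 1 ->
  tvb_eq n (Si h :: w) (R h.+1 :: R h :: Si h.+1 :: R h :: R h.+1 :: w).
Proof. by move=> h1 h2; rewrite mixedV; [rewrite !rho_sq // |..]; lia. Qed.

Lemma lam_core_braid k b : 1 <= k -> k.+1 <= n - 1 ->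
  tvb_eq n (R k :: lam_core b k.+1 ++ [:: R k]) (R k.+1 :: lam_core b k ++ [:: R k.+1]).
Proof.
move=> k1 k2; case: b => /=.
  rewrite (rho_sq n k.+1) ?(rho_sq n k) ?(sigmaV_rho_conj k) ?(rho_sq n k.+1); try lia.
  by rewrite rho_braid ?(rho_sq n k.+1 [::]) //; lia.
by rewrite (sigmaV_rho_conj k) ?(rho_sq n k.+1 [::]) -?rho_braid ?(rho_sq n k) //; lia.
Qed.

Lemma lam_core_flip k b : 1 <= k <= n - 1 ->
  tvb_eq n (R k :: lam_core b k ++ [:: R k]) (lam_core (~~ b) k).
Proof. by move=> hk; case: b => //=; rewrite !rho_sq. Qed.

End LamCore.

Lemma lam_dir_conj n k b c m : 1 <= k <= n - 1 -> 1 <= c -> c.+1 + m <= n ->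
  tvb_eq n (R k :: lam_dir b c (c.+1 + m) ++ [:: R k])
           (lam_dir b (adj_swap k c) (adj_swap k (c.+1 + m))).
Proof.
move=> hk hc hm; rewrite lam_dirE.
case: (eqVneq k.+1 c) => [ec|k1c].
  subst c.
  have -> : adj_swap k k.+1 = k by rewrite /adj_swap; case_ifs; lia.
  have -> : adj_swap k (k.+2 + m) = k.+1 + m.+1 by rewrite /adj_swap; case_ifs; lia.
  by rewrite lam_dirE; apply: frame_peel; [lia | lia | apply: lam_core_braid; lia].
case: (eqVneq k c) => [ec|kc].
  subst c.
  have -> : adj_swap k k = k.+1 by rewrite /adj_swap; case_ifs; lia.
  case: m hm => [|m] hm.
    have -> : adj_swap k (k.+1 + 0) = k by rewrite /adj_swap; case_ifs; lia.
    have -> : lam_dir b k.+1 k = lam_dir (~~ b) k (k.+1 + 0) by case: b; rewrite addn0.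
    by rewrite lam_dirE /frame /= !cats0; apply: lam_core_flip.
  have -> : adj_swap k (k.+1 + m.+1) = k.+2 + m by rewrite /adj_swap; case_ifs; lia.
  rewrite lam_dirE -(frame_peel n k m (lam_core b k) (lam_core b k.+1)); try lia.
    by rewrite /= rho_sq -?catA ?cat1s ?(rho_sq n k [::]) ?cats0.
  by apply: lam_core_braid; lia.
have -> : adj_swap k c = c by rewrite /adj_swap; case_ifs; lia.
have [m' em'] : exists m', adj_swap k (c.+1 + m) = c.+1 + m'.
  by exists (adj_swap k (c.+1 + m) - c.+1); rewrite /adj_swap; case_ifs; lia.
rewrite em' lam_dirE; apply: frame_conj_far => //.
by move=> k' hk' f; apply: lam_core_comm => //; lia.
Qed.

Lemma lam_conj n k i j : 1 <= k <= n - 1 -> 1 <= i <= n -> 1 <= j <= n -> i != j ->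
  tvb_eq n (R k :: lam i j ++ [:: R k]) (lam (adj_swap k i) (adj_swap k j)).
Proof.
move=> hk hi hj; case: (ltngtP i j) => [ij|ji|->]; rewrite ?eqxx // => _.
  by move: (lam_dir_conj n k false i (j - i.+1)); rewrite subnKC //; apply; lia.
by move: (lam_dir_conj n k true j (i - j.+1)); rewrite subnKC //; apply; lia.
Qed.

Lemma gamma_conj n k i : 1 <= k <= n - 1 -> 1 <= i <= n ->
  tvb_eq n (R k :: ga i ++ [:: R k]) (ga (adj_swap k i)).
Proof.
rewrite /adj_swap => hk hi; case_ifs.
- by rewrite E; have /= -> := tvb_rel_eq _ _ _ [:: R k] (R_rg hk); rewrite rho_sq.
- by rewrite E0; have /= <- := tvb_rel_eq _ _ _ [::] (R_rg hk); rewrite rho_sq.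
- have k1 : i != k by apply/eqP.
  have k2 : i != k.+1 by apply/eqP.
  by have /= -> := tvb_rel_eq _ _ _ [::] (R_gr_comm hk hi k1 k2); rewrite rho_sq.
Qed.

Lemma rho_word_conj n (X : nat -> nat -> word) (P : nat -> nat -> bool) :
  (forall k i j, 1 <= k <= n - 1 -> P i j ->
     tvb_eq n (R k :: X i j ++ [:: R k]) (X (adj_swap k i) (adj_swap k j))) ->
  (forall k i j, 1 <= k <= n - 1 -> P i j -> P (adj_swap k i) (adj_swap k j)) ->
  (forall i j, P i j -> 1 <= i <= n /\ 1 <= j <= n) ->
  forall a i j, rho_word n a -> P i j ->
  tvb_eq n (winv a ++ X i j ++ a) (X (actn (phiP n a) i) (actn (phiP n a) j)).
Proof.
move=> X_conj P_swap P_range; elim=> [|[[|k|] b] a IH] //= i j.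
  by move=> _ /P_range [hi hj]; rewrite !actn1 // cats0.
case/andP=> hk /IH {}IH hij; have {}hk : 1 <= k <= n - 1 := hk.
have [hi hj] := P_range i j hij.
rewrite winv_cons -!catA /= letter_perm_rho !rhoV // !actnM // !actn_tr //; try lia.
have -> : R k :: X i j ++ R k :: a = (R k :: X i j ++ [:: R k]) ++ a by rewrite /= -catA.
by rewrite X_conj //; apply: IH; apply: P_swap.
Qed.

Lemma wf_winv_rho_word n a : rho_word n a -> wf n (winv a).
Proof.
rewrite /wf /winv all_rev all_map; apply: sub_all.
by case=> -[k|k|k] b //=; rewrite /is_rho /valid_letter.
Qed.

Theorem mainTheorem3 (n : nat) (hn : 2 <= n) :
  (forall w1 w2 : word, wf n w1 -> wf n w2 -> tvb_eq n w1 w2 -> phiP n w1 = phiP n w2) /\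
  (forall w1 w2 : word, phiP n (w1 ++ w2) = (phiP n w1 * phiP n w2)%g) /\
  (forall a1 a2 : word, rho_word n a1 -> rho_word n a2 ->
     phiP n a1 = phiP n a2 -> tvb_eq n a1 a2) /\
  (forall s : 'S_n, exists a : word, rho_word n a /\ phiP n a = s) /\
  (forall w p : word, wf n w -> wf n p -> phiP n p = 1%g ->
     phiP n (winv w ++ p ++ w) = 1%g) /\
  (forall a : word, rho_word n a -> phiP n a = 1%g -> tvb_eq n a [::]) /\
  (forall w : word, wf n w -> exists p a : word,
     [/\ wf n p, phiP n p = 1%g, rho_word n a & tvb_eq n w (p ++ a)]) /\
  (forall (a : word) (i j : nat), rho_word n a -> 1 <= i <= n -> 1 <= j <= n -> i != j ->
     tvb_eq n (winv a ++ lam i j ++ a)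
              (lam (actn (phiP n a) i) (actn (phiP n a) j))) /\
  (forall (a : word) (i : nat), rho_word n a -> 1 <= i <= n ->
     tvb_eq n (winv a ++ ga i ++ a) (ga (actn (phiP n a) i))).
Proof.
have hn1 : 1 <= n by lia.
split; first by move=> w1 w2 _ _; exact: phiP_eq.
split; first exact: phiP_cat.
split; first by move=> a1 a2; exact: rho_word_inj.
split; first exact: rho_word_surj.
split; first by move=> w p _ _ hp; rewrite !phiP_cat phiP_winv hp mul1g mulVg.
split; first by move=> a ha hp; exact: (rho_word_inj n a [::] hn1 ha isT hp).
split.
  move=> w hw; have [a [ha pa]] := rho_word_surj n (phiP n w).
  exists (w ++ winv a), a; split=> //.
  - by move: hw (wf_winv_rho_word n a ha); rewrite /wf all_cat => -> ->.
  - by rewrite phiP_cat phiP_winv pa mulgV.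
  - by rewrite -catA winv_cat_cancel cats0.
split=> [a i j ha hi hj hij | a i ha hi].
  apply: (rho_word_conj n lam (fun i j => [&& 1 <= i <= n, 1 <= j <= n & i != j])) => //.
  - by move=> k i' j' hk /and3P [? ? ?]; exact: lam_conj.
  - by move=> k i' j' hk /and3P [? ? ?]; rewrite /adj_swap; case_ifs; lia.
  - by move=> i' j' /and3P [? ? _].
  - by rewrite hi hj hij.
apply: (rho_word_conj n (fun i _ => ga i) (fun i j => (1 <= i <= n) && (1 <= j <= n))
  _ _ _ a i i) => //.
- by move=> k i' j' hk /andP [? _]; exact: gamma_conj.
- by move=> k i' j' hk /andP [? ?]; rewrite /adj_swap; case_ifs; lia.
- by move=> i' j' /andP.
- by rewrite hi.
Qed.
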